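(* Let $\underline t\in(\mathbb{C}^* )^4$ be such that $C_{\underline t}$ is smooth. Then every algebraic symplectic form on $C_{\underline t}$ is a constant multiple of the form $\Omega=dX_1\wedge dX_2\big/\frac{\partial R_{\underline t}}{\partial X_3}$.
   Context: With $\bar k_i=k_i-k_i^{-1}$, $\bar u_i=u_i-u_i^{-1}$ for $\underline t=(k_0,k_1,u_0,u_1)$, $R_{\underline t}=X_1X_2X_3-X_1^2-X_2^2-X_3^2+(\bar u_0\bar k_0+\bar k_1\bar u_1)X_1+(\bar u_1\bar u_0+\bar k_0\bar k_1)X_2+(\bar k_0\bar u_1+\bar k_1\bar u_0)X_3+\bar k_0^2+\bar k_1^2+\bar u_0^2+\bar u_1^2-\bar k_0\bar k_1\bar u_0\bar u_1+4$ and $C_{\underline t}=\{R_{\underline t}=0\}\subset\mathbb{C}^3$. The form $\Omega$ (defined where $\partial R_{\underline t}/\partial X_3\neq 0$) extends to a regular nowhere-vanishing 2-form on smooth $C_{\underline t}$. *)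

From HB Require Import structures.
From mathcomp Require Import all_boot all_order all_algebra.
From mathcomp Require Import complex.
From mathcomp Require Import Rstruct.
From mathcomp Require Import mpoly.

Set Implicit Arguments.
Unset Strict Implicit.
Unset Printing Implicit Defensive.

Import Order.TTheory GRing.Theory Num.Theory.
Local Open Scope ring_scope.

Definition CC : Type := complex Rdefinitions.R.

Notation poly3 := {mpoly CC[3]}.

(* points / tangent vectors of C^3, indexed 0,1,2 for X_1,X_2,X_3 *)
Notation pt3 := ('I_3 -> CC).

Definition i0 : 'I_3 := @Ordinal 3 0 isT.
Definition i1 : 'I_3 := @Ordinal 3 1 isT.
Definition i2 : 'I_3 := @Ordinal 3 2 isT.

Definition X1 : poly3 := 'X_i0.
Definition X2 : poly3 := 'X_i1.
Definition X3 : poly3 := 'X_i2.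

Definition bar (a : CC) : CC := a - a^-1.

(* R_t for t = (k0, k1, u0, u1) *)
Definition Rt (k0 k1 u0 u1 : CC) : poly3 :=
  X1 * X2 * X3 - X1 ^+ 2 - X2 ^+ 2 - X3 ^+ 2
  + (bar u0 * bar k0 + bar k1 * bar u1) *: X1
  + (bar u1 * bar u0 + bar k0 * bar k1) *: X2
  + (bar k0 * bar u1 + bar k1 * bar u0) *: X3
  + (bar k0 ^+ 2 + bar k1 ^+ 2 + bar u0 ^+ 2 + bar u1 ^+ 2
     - bar k0 * bar k1 * bar u0 * bar u1 + 4)%:MP.

Definition on_Ct (P : poly3) (p : pt3) : Prop := P.@[p] = 0.

Definition smooth_hyp (P : poly3) : Prop :=
  forall p : pt3, on_Ct P p -> exists i : 'I_3, (P^`M(i)).@[p] != 0.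

Definition tangent (P : poly3) (p : pt3) (v : pt3) : Prop :=
  \sum_(i < 3) (P^`M(i)).@[p] * v i = 0.

(* An algebraic 2-form on C_t is represented by (the restriction of) a
   polynomial 2-form  a12 dX1^dX2 + a13 dX1^dX3 + a23 dX2^dX3  on C^3;
   two representatives define the same form on C_t iff they agree on all
   tangent spaces of C_t. *)
Record form2 := Form2 { a12 : poly3; a13 : poly3; a23 : poly3 }.

Definition wedge (u v : pt3) (i j : 'I_3) : CC := u i * v j - u j * v i.

Definition form2_eval (w : form2) (p : pt3) (u v : pt3) : CC :=
  (a12 w).@[p] * wedge u v i0 i1
  + (a13 w).@[p] * wedge u v i0 i2
  + (a23 w).@[p] * wedge u v i1 i2.

(* symplectic on C_t: nondegenerate on T_p C_t for every p in C_t
   (closedness is automatic for a 2-form on a surface). Since T_p C_t is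
   2-dimensional for smooth C_t, nondegeneracy means the restriction of w_p
   to T_p C_t is a nonzero alternating form. *)
Definition symplectic_on (P : poly3) (w : form2) : Prop :=
  forall p : pt3, on_Ct P p ->
    forall u, tangent P p u ->
      (forall v, tangent P p v -> form2_eval w p u v = 0) -> forall i, u i = 0.

Definition Omega_eval (P : poly3) (p : pt3) (u v : pt3) : CC :=
  wedge u v i0 i1 / (P^`M(i2)).@[p].

From HB Require Import structures.
From mathcomp Require Import all_boot all_order all_algebra.
From mathcomp Require Import complex Rstruct mpoly.
From mathcomp Require Import ring.

(* On a tangent plane of C_t the three coordinate 2-forms are proportional to
   the components of grad R_t, so a polynomial 2-form restricts to h * Omega
   with h = a23 dR/dX1 - a13 dR/dX2 + a12 dR/dX3, and nondegeneracy says that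
   h has no zero on C_t.  It remains to see that such an h is constant on a
   cubic xyz - x^2 - y^2 - z^2 + ax + by + cz + d = 0.  Writing x = l + 1/l,
   the fibre over a generic x is a smooth conic parametrised by r <> 0; with
   denominators cleared, h on it is a polynomial N(l, r) with no zero at
   r <> 0, hence a monomial A(l) r^K, and the involution
   (l, r) |-> (1/l, -G(l) / (l^4 r)) of the parametrisation forces h to be
   independent of r.  So h is constant on generic x-fibres, likewise on generic
   y-fibres, and these meet.  Finally, on each plane conic y = const, a
   polynomial vanishing above all but finitely many x vanishes identically,
   which extends the constant to all of the surface. *)

Set Implicit Arguments.
Unset Strict Implicit.
Unset Printing Implicit Defensive.

Import GRing.Theory Num.Theory.
Local Open Scope ring_scope.

Section ClosedFieldPoly.
Variable F : closedFieldType.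
Implicit Types (p E : {poly F}) (x : F).

Lemma poly_eq0_off_roots E p :
  E != 0 -> (forall x, E.[x] != 0 -> p.[x] = 0) -> p = 0.
Proof.
move=> E_neq0 Ep0; apply: contraTeq isT => p_neq0.
have /closed_nonrootP[x] := mulf_neq0 E_neq0 p_neq0.
by rewrite rootM negb_or => /andP[/Ep0/rootP->].
Qed.

Lemma quadratic_solvable (b c : F) : exists z : F, z ^+ 2 = b * z + c.
Proof.
have [z zE] := @solve_monicpoly F 2 (nth 0 [:: c; b]) isT.
by exists z; rewrite zE !big_ord_recl big_ord0 /= addr0 mulr1 addrC.
Qed.

Lemma monomial_of_nonzero_roots p :
  (forall r, r != 0 -> p.[r] != 0) -> exists a n, p = a *: 'X^n.
Proof.
move=> p_nz; have [rs pE] := closed_field_poly_normal p.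
have rs0 : all (pred1 0) rs.
  apply/allP => z z_rs /=; apply/negPn/negP => z_neq0.
  move: (p_nz z z_neq0); rewrite pE hornerZ (rootP _) ?mulr0 ?eqxx //.
  by rewrite root_prod_XsubC.
exists (lead_coef p), (size rs); rewrite {1}pE; congr (_ *: _).
elim: rs rs0 {pE} => [|z rs IHrs] /=; first by rewrite big_nil expr0.
by case/andP=> /eqP-> /IHrs; rewrite big_cons subr0 exprS => ->.
Qed.

End ClosedFieldPoly.

Section HomogeneousEvaluation.
Variables (n : nat) (K : nzRingType).
Implicit Types p : {mpoly K[n]}.

Definition mhomeval (S : nzRingType) (f : K -> S) (v : 'I_n -> S) (w : S)
    (M : nat) p : S :=
  \sum_(m <- msupp p) f p@_m * mmap1 v m * w ^+ (M - mdeg m).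

Lemma eq_mhomeval (S : nzRingType) (f1 f2 : K -> S) (v1 v2 : 'I_n -> S)
    (w : S) M p :
  f1 =1 f2 -> v1 =1 v2 -> mhomeval f1 v1 w M p = mhomeval f2 v2 w M p.
Proof.
by move=> ef ev; apply: eq_bigr => m _; rewrite ef (mmap1_eq _ ev).
Qed.

Lemma rmorph_mhomeval (S T : nzRingType) (g : {rmorphism S -> T}) (f : K -> S)
    (v : 'I_n -> S) (w : S) M p :
  g (mhomeval f v w M p) = mhomeval (g \o f) (g \o v) (g w) M p.
Proof.
rewrite rmorph_sum; apply: eq_bigr => m _.
rewrite !rmorphM rmorphXn rmorph_prod; congr (_ * _ * _).
by apply: eq_bigr => i _; rewrite rmorphXn.
Qed.

End HomogeneousEvaluation.

Lemma mhomevalE n (F : fieldType) (v : 'I_n -> F) (w : F) M (p : {mpoly F[n]}) :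
  w != 0 -> (msize p <= M)%N ->
  mhomeval id v w M p = w ^+ M * p.@[fun i => v i / w].
Proof.
move=> w_neq0 szp; rewrite mevalE mulr_sumr; apply: eq_big_seq => m m_supp.
have deg_m : (mdeg m <= M)%N := ltnW (leq_trans (msize_mdeg_lt m_supp) szp).
have -> : \prod_i (v i / w) ^+ m i = mmap1 v m / w ^+ mdeg m.
  rewrite mdegE -prodrXr -prodf_div.
  by apply: eq_bigr => i _; rewrite exprMn exprVn.
by rewrite exprB ?unitfE //=; ring.
Qed.

Section BivariateEvaluation.
Variable F : comNzRingType.

Definition eval2 (x z : F) : {rmorphism {poly {poly F}} -> F} :=
  (horner_eval z \o map_poly (horner_eval x))%FUN.

Lemma eval2E x z P : eval2 x z P = (map_poly (horner_eval x) P).[z].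
Proof. by []. Qed.

Lemma eval2_polyC x z (p : {poly F}) : eval2 x z p%:P = p.[x].
Proof. by rewrite eval2E map_polyC hornerC. Qed.

Lemma eval2C x z (k : F) : eval2 x z k%:P%:P = k.
Proof. by rewrite eval2_polyC hornerC. Qed.

Lemma eval2_inner x z : eval2 x z 'X%:P = x.
Proof. by rewrite eval2_polyC hornerX. Qed.

Lemma eval2X x z : eval2 x z 'X = z.
Proof. by rewrite eval2E map_polyX hornerX. Qed.

End BivariateEvaluation.

Lemma bivariate_monomial (F : closedFieldType) (N : {poly {poly F}})
    (E : {poly F}) :
  E != 0 -> (forall x, E.[x] != 0 -> forall z, z != 0 -> eval2 x z N != 0) ->
  N = (lead_coef N)%:P * 'X^((size N).-1).
Proof.
move=> E_neq0 N_nz; apply/polyP => j; rewrite coefCM coefXn.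
have [->|j_neq] := eqVneq j (size N).-1; first by rewrite mulr1.
rewrite mulr0; apply: contraTeq isT => Nj_neq0.
have lc_neq0 : lead_coef N != 0.
  by rewrite lead_coef_eq0; apply: contraNneq Nj_neq0 => ->; rewrite coef0.
have /closed_nonrootP[x] := mulf_neq0 (mulf_neq0 E_neq0 Nj_neq0) lc_neq0.
rewrite !rootM !negb_or => /andP[/andP[Ex Njx] lcx].
set Nx := map_poly (horner_eval x) N.
have [al [n NxE]] : exists al n, Nx = al *: 'X^n.
  by apply: monomial_of_nonzero_roots => z; apply: N_nz.
have coefNx i : Nx`_i = al * (i == n)%:R by rewrite NxE coefZ coefXn.
move: Njx lcx; rewrite /root -!horner_evalE -!coef_map -/Nx !coefNx.
have [jn|] := eqVneq j n; last by rewrite mulr0 eqxx.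
have [Kn|] := eqVneq (size N).-1 n; last by rewrite mulr0 eqxx.
by move: j_neq; rewrite jn Kn eqxx.
Qed.

Lemma monomial_inversion_exponent (F : numFieldType) (f g : F -> F) (al be C : F)
    (K M : nat) :
  C != 0 -> f 1 != 0 ->
  (forall r, r != 0 -> f r * r ^+ M = al * r ^+ K) ->
  (forall s, s != 0 -> g s * s ^+ M = be * s ^+ K) ->
  (forall r, r != 0 -> f r = g (C / r)) -> K = M.
Proof.
move=> C_neq0 f1_neq0 fE gE fg.
have two_neq0 : (2 : F) != 0 by rewrite pnatr_eq0.
have C2_neq0 : C / 2 != 0 by rewrite mulf_neq0 ?invr_neq0.
have f2E : f 2 * 2 ^+ M = f 1 * 2 ^+ K.
  by have := fE 1 (oner_neq0 _); rewrite !expr1n !mulr1 => ->; apply: fE.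
have f2E' : f 2 * 2 ^+ K = f 1 * 2 ^+ M.
  have gCE : g C = be * C ^+ K / C ^+ M by rewrite -gE // mulfK ?expf_neq0.
  have gC2E : g (C / 2) = be * (C / 2) ^+ K / (C / 2) ^+ M.
    by rewrite -gE // mulfK // expf_neq0.
  rewrite (fg 1) ?oner_neq0 // (fg 2) // divr1 gCE gC2E !expr_div_n.
  by field; rewrite !expf_neq0.
have : f 1 * 2 ^+ K * 2 ^+ K = f 1 * 2 ^+ M * 2 ^+ M.
  by rewrite -f2E -mulrA (mulrC (2 ^+ M)) mulrA f2E'.
rewrite -!mulrA -!exprD.
move/(mulfI f1_neq0)/eqP; rewrite -!natrX eqr_nat eqn_exp2l // !addnn.
by move/eqP/double_inj.
Qed.

Section PlaneConics.
Variable F : closedFieldType.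

Lemma linear_vanish_at_roots (B C r0 r1 : F) :
  (forall z, z ^+ 2 = B * z + C -> r0 + r1 * z = 0) <->
  r1 ^+ 2 * (B ^+ 2 + C *+ 4) = 0 /\ r0 ^+ 2 + r0 * r1 * B - r1 ^+ 2 * C = 0.
Proof.
split=> [vanish | [D1 D2] z zE].
  have [z1 z1E] := quadratic_solvable B C.
  have z2E : (B - z1) ^+ 2 = B * (B - z1) + C.
    by apply/eqP; rewrite -subr_eq0 -(subrr (z1 ^+ 2)) {2}z1E; apply/eqP; ring.
  have e1 := vanish _ z1E; have e2 := vanish _ z2E.
  have c0 : C + B * z1 - z1 ^+ 2 = 0 by rewrite z1E; ring.
  split.
    have -> : r1 ^+ 2 * (B ^+ 2 + C *+ 4)
        = ((r0 + r1 * z1) - (r0 + r1 * (B - z1))) ^+ 2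
          + 4%:R * r1 ^+ 2 * (C + B * z1 - z1 ^+ 2) by ring.
    by rewrite e1 e2 c0 subrr expr0n mulr0 addr0.
  have -> : r0 ^+ 2 + r0 * r1 * B - r1 ^+ 2 * C
      = (r0 + r1 * z1) * (r0 + r1 * (B - z1)) - r1 ^+ 2 * (C + B * z1 - z1 ^+ 2)
    by ring.
  by rewrite e1 c0 mul0r mulr0 subrr.
have c0 : C + B * z - z ^+ 2 = 0 by rewrite zE; ring.
have [r1_0|r1_neq0] := eqVneq r1 0.
  move: D2; rewrite r1_0 !(mulr0, mul0r, expr0n, subr0, addr0) => /eqP.
  by rewrite expf_eq0 => /eqP.
move/eqP: D1; rewrite mulf_eq0 expf_eq0 (negbTE r1_neq0) /= => /eqP D1.
have Bz : 2%:R * z - B = 0.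
  have : (2%:R * z - B) ^+ 2 = (B ^+ 2 + C *+ 4) - 4%:R * (C + B * z - z ^+ 2).
    by ring.
  by rewrite D1 c0 mulr0 subrr => /eqP; rewrite expf_eq0 => /eqP.
have : r0 ^+ 2 + r0 * r1 * B - r1 ^+ 2 * C = (r0 + r1 * z) ^+ 2
    - (2%:R * z - B) * r1 * (r0 + r1 * z) - r1 ^+ 2 * (C + B * z - z ^+ 2) by ring.
by rewrite D2 Bz c0 !mul0r mulr0 !subr0 => /esym/eqP; rewrite expf_eq0 => /eqP.
Qed.

Lemma conic_eval_linear (P : {poly {poly F}}) (B C : {poly F}) :
  exists r0 r1 : {poly F}, forall x z, z ^+ 2 = B.[x] * z + C.[x] ->
    eval2 x z P = r0.[x] + r1.[x] * z.
Proof.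
pose Q : {poly {poly F}} := 'X * ('X - B%:P) - C%:P.
have size_XXB : size ('X * ('X - B%:P) : {poly {poly F}}) = 3.
  by rewrite mulrC size_mulX ?size_XsubC // -size_poly_eq0 size_XsubC.
have Q_monic : Q \is monic.
  rewrite monicE lead_coefDl ?size_polyN ?size_XXB //;
    last exact: leq_ltn_trans (size_polyC_leq1 _) _.
  by rewrite -monicE monicMl ?monicX ?monicXsubC.
have PE := Pdiv.RingMonic.rdivp_eq Q_monic P.
set r := Pdiv.CommonRing.rmodp P Q in PE.
have size_r : (size r <= 2)%N.
  by have := Pdiv.Ring.ltn_rmodp P Q; rewrite monic_neq0 // /Q size_polyDl ?size_XXB
    ?size_polyN ?(leq_ltn_trans (size_polyC_leq1 _)).
have rE : r = (r`_0)%:P + (r`_1)%:P * 'X.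
  apply/polyP => -[|[|j]];
    rewrite coefD coefC coefCM coefX ?mulr0 ?mulr1 ?addr0 ?add0r //.
  by rewrite nth_default // (leq_trans size_r).
exists r`_0, r`_1 => x z zE.
have Qz : eval2 x z Q = 0.
  by rewrite !(rmorphB, rmorphM) !eval2_polyC eval2X -(subrr (z ^+ 2)) {2}zE; ring.
rewrite PE rmorphD rmorphM Qz mulr0 add0r {1}rE.
by rewrite rmorphD rmorphM !eval2_polyC eval2X.
Qed.

Lemma conic_vanish (P : {poly {poly F}}) (B C E : {poly F}) : E != 0 ->
  (forall x, E.[x] != 0 -> forall z,
     z ^+ 2 = B.[x] * z + C.[x] -> eval2 x z P = 0) ->
  forall x z, z ^+ 2 = B.[x] * z + C.[x] -> eval2 x z P = 0.
Proof.
move=> E_neq0 P_vanish.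
have [r0 [r1 PE]] := conic_eval_linear P B C.
pose D1 := r1 ^+ 2 * (B ^+ 2 + C *+ 4).
pose D2 := r0 ^+ 2 + r0 * r1 * B - r1 ^+ 2 * C.
have D_horner x : D1.[x] = r1.[x] ^+ 2 * (B.[x] ^+ 2 + C.[x] *+ 4)
    /\ D2.[x] = r0.[x] ^+ 2 + r0.[x] * r1.[x] * B.[x] - r1.[x] ^+ 2 * C.[x].
  by rewrite hornerM hornerD hornerMn !(horner_exp, hornerD, hornerN, hornerM).
have D_root x : E.[x] != 0 -> D1.[x] = 0 /\ D2.[x] = 0.
  move=> Ex; have [-> ->] := D_horner x.
  by apply/linear_vanish_at_roots => z zE; rewrite -PE // P_vanish.
have [D1_0 D2_0] : D1 = 0 /\ D2 = 0.
  by split; apply: (poly_eq0_off_roots E_neq0) => x /D_root[].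
move=> x z zE; rewrite PE //; move: z zE; apply/linear_vanish_at_roots.
by have [<- <-] := D_horner x; rewrite D1_0 D2_0 horner0.
Qed.

End PlaneConics.

Section FrickeCubic.
Variable S : comNzRingType.
Implicit Types (a b c d l r x y z : S) (p : 'I_3 -> S).

Definition mk3 x y z : 'I_3 -> S := fun i => [:: x; y; z]`_i.

Definition fricke a b c d p : S :=
  p i0 * p i1 * p i2 - p i0 ^+ 2 - p i1 ^+ 2 - p i2 ^+ 2
  + a * p i0 + b * p i1 + c * p i2 + d.

Definition fibre_disc a b c d x : S :=
  (- x ^+ 2 + a * x + d) * (x ^+ 2 - 4%:R) - (b ^+ 2 + c ^+ 2 + b * c * x).

Definition fibre_discl a b c d l : S :=
  (- (l ^+ 2 + 1) ^+ 2 + a * l * (l ^+ 2 + 1) + d * l ^+ 2) * (l ^+ 2 - 1) ^+ 2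
  - l ^+ 3 * (b * l + c) * (b + c * l).

(* Over x = l + 1/l the surface is the conic
   (y - l z - P) (y - z/l + Q) = fibre_discl l / (l^2 (l^2 - 1)^2), with P, Q
   as in fricke_x_fibre; fibre_num / fibre_den is its point with
   y - l z - P = r / (l (l^2 - 1)), as a fraction of polynomials in (l, r). *)
Definition fibre_num a b c d l r : 'I_3 -> S :=
  mk3 ((l ^+ 2 + 1) * (l ^+ 2 - 1) ^+ 2 * r)
      (l ^+ 2 * (fibre_discl a b c d l - l * (b + c * l) * r)
       - (r ^+ 2 + l ^+ 2 * (b * l + c) * r))
      (l * (fibre_discl a b c d l - l * (b + c * l) * r
            - (r ^+ 2 + l ^+ 2 * (b * l + c) * r))).

Definition fibre_den l r : S := l * (l ^+ 2 - 1) ^+ 2 * r.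

Lemma mk3_eta p : p =1 mk3 (p i0) (p i1) (p i2).
Proof. by case=> [[|[|[|]]] Hi] //=; congr p; apply: val_inj. Qed.

Lemma fricke_swap a b c d x y z :
  fricke b a c d (mk3 y x z) = fricke a b c d (mk3 x y z).
Proof. by rewrite /fricke /=; ring. Qed.

End FrickeCubic.

Section FrickeMorph.
Variables (S T : comNzRingType) (g : {rmorphism S -> T}).
Variables (a b c d l r x y z : S).

Lemma rmorph_fibre_disc :
  g (fibre_disc a b c d l) = fibre_disc (g a) (g b) (g c) (g d) (g l).
Proof.
by rewrite /fibre_disc !(rmorph_nat, rmorphXn, rmorphB, rmorphD, rmorphM, rmorphN).
Qed.

Lemma rmorph_fibre_discl :
  g (fibre_discl a b c d l) = fibre_discl (g a) (g b) (g c) (g d) (g l).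
Proof.
by rewrite /fibre_discl !(rmorphXn, rmorphB, rmorphD, rmorphM, rmorphN, rmorph1).
Qed.

Lemma rmorph_mk3 : g \o mk3 x y z =1 mk3 (g x) (g y) (g z).
Proof. by rewrite /mk3 => -[[|[|[|i]]] ?] //=; rewrite rmorph0. Qed.

Lemma rmorph_fibre_num i :
  g (fibre_num a b c d l r i) = fibre_num (g a) (g b) (g c) (g d) (g l) (g r) i.
Proof.
rewrite /fibre_num /mk3; case: i => [[|[|[|i]]] ?] /=; rewrite ?rmorph0 //;
  by rewrite !(rmorph_fibre_discl, rmorphXn, rmorphB, rmorphD, rmorphM, rmorphN,
               rmorph1).
Qed.

Lemma rmorph_fibre_den : g (fibre_den l r) = fibre_den (g l) (g r).
Proof. by rewrite /fibre_den !(rmorphB, rmorphM, rmorphXn, rmorph1). Qed.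

End FrickeMorph.

Section XFibres.
Variables (R : numClosedFieldType) (a b c d : R).
Implicit Types (l r y z : R).

Definition good_param l :=
  [&& l != 0, l ^+ 2 - 1 != 0 & fibre_discl a b c d l != 0].

Definition fibre_pt l r : 'I_3 -> R :=
  fun i => fibre_num a b c d l r i / fibre_den l r.

Lemma fricke_fibre_pt l r : good_param l -> r != 0 ->
  fricke a b c d (fibre_pt l r) = 0.
Proof.
case/and3P=> l_neq0 l2_neq1 _ r_neq0.
rewrite /fricke /fibre_pt /fibre_num /fibre_den /fibre_discl /mk3 /=.
by field; rewrite l_neq0 l2_neq1 r_neq0.
Qed.

Lemma fricke_x_fibre l y z : l != 0 -> l ^+ 2 - 1 != 0 ->
  fricke a b c d (mk3 (l + l^-1) y z) =
  fibre_discl a b c d l / (l ^+ 2 * (l ^+ 2 - 1) ^+ 2)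
  - (y - l * z - l * (b * l + c) / (l ^+ 2 - 1))
    * (y - z / l + (b + c * l) / (l ^+ 2 - 1)).
Proof.
move=> l_neq0 l2_neq1; rewrite /fricke /fibre_discl /mk3 /=.
by field; rewrite l_neq0 l2_neq1.
Qed.

Lemma fibre_pt_surj l y z : good_param l ->
  fricke a b c d (mk3 (l + l^-1) y z) = 0 ->
  exists2 r, r != 0 & mk3 (l + l^-1) y z =1 fibre_pt l r.
Proof.
case/and3P=> l_neq0 l2_neq1 G_neq0.
rewrite fricke_x_fibre // => /eqP; rewrite subr_eq0 => /eqP.
set P := l * (b * l + c) / _; set Q := (b + c * l) / _.
set e := y - l * z - P; set f := y - z / l + Q => Gef.
have GE : fibre_discl a b c d l = e * f * (l ^+ 2 * (l ^+ 2 - 1) ^+ 2).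
  by rewrite -Gef divfK // mulf_neq0 // expf_neq0.
have e_neq0 : e != 0.
  by apply: contraNneq G_neq0; rewrite GE => ->; rewrite !mul0r.
have yE : y = (l ^+ 2 * (f - Q) - (e + P)) / (l ^+ 2 - 1).
  by rewrite /f /e; field; rewrite l_neq0 l2_neq1.
have zE : z = (f - Q - (e + P)) * l / (l ^+ 2 - 1).
  by rewrite /f /e; field; rewrite l_neq0 l2_neq1.
exists (e * (l * (l ^+ 2 - 1))); first by rewrite !mulf_neq0.
clearbody e f; subst y z.
rewrite /fibre_pt /fibre_num /fibre_den GE /P /Q /mk3 => -[[|[|[|]]] ?] //=;
  by field; rewrite l_neq0 l2_neq1 e_neq0.
Qed.

Lemma fibre_discl_inv l : l != 0 ->
  fibre_discl a b c d l^-1 = fibre_discl a b c d l / l ^+ 8.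
Proof. by move=> l_neq0; rewrite /fibre_discl; field; rewrite l_neq0. Qed.

Lemma good_param_inv l : good_param l -> good_param l^-1.
Proof.
case/and3P=> l_neq0 l2_neq1 G_neq0.
rewrite /good_param fibre_discl_inv // invr_eq0 l_neq0.
have -> : l^-1 ^+ 2 - 1 = - (l ^+ 2 - 1) / l ^+ 2 by field.
by rewrite !mulf_neq0 ?oppr_eq0 ?invr_eq0 ?expf_neq0.
Qed.

Lemma fibre_pt_inv l r : good_param l -> r != 0 ->
  fibre_pt l^-1 (- fibre_discl a b c d l / l ^+ 4 / r) =1 fibre_pt l r.
Proof.
case/and3P=> l_neq0 l2_neq1 G_neq0 r_neq0.
have l2_neq1' : 1 + -1 * l ^+ 2 != 0 by rewrite mulN1r -opprB oppr_eq0.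
rewrite /fibre_pt /fibre_num /fibre_den fibre_discl_inv //.
move: (fibre_discl a b c d l) G_neq0 => G G_neq0.
rewrite /mk3 => -[[|[|[|]]] ?] //=;
  by field; rewrite l_neq0 l2_neq1 l2_neq1' r_neq0 G_neq0.
Qed.

End XFibres.

Section GenericFibres.
Variables (R : numClosedFieldType) (a b c d : R).

Lemma horner_fibre_disc x :
  (fibre_disc a%:P b%:P c%:P d%:P 'X).[x] = fibre_disc a b c d x.
Proof.
have := rmorph_fibre_disc (horner_eval x) a%:P b%:P c%:P d%:P 'X.
by rewrite /= !horner_evalE !hornerC hornerX.
Qed.

Lemma horner_fibre_discl x :
  (fibre_discl a%:P b%:P c%:P d%:P 'X).[x] = fibre_discl a b c d x.
Proof.
have := rmorph_fibre_discl (horner_eval x) a%:P b%:P c%:P d%:P 'X.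
by rewrite /= !horner_evalE !hornerC hornerX.
Qed.

Definition disc_poly : {poly R} :=
  ('X ^+ 2 - 4%:R%:P) * fibre_disc a%:P b%:P c%:P d%:P 'X.

Lemma horner_disc_poly x :
  disc_poly.[x] = (x ^+ 2 - 4%:R) * fibre_disc a b c d x.
Proof. by rewrite hornerM horner_fibre_disc !hornerE. Qed.

Lemma disc_poly_neq0 : disc_poly != 0.
Proof.
rewrite mulf_neq0 ?(monic_neq0 (monicXnsubC _ _)) //; apply/eqP => D0.
have Dx x : fibre_disc a b c d x = 0.
  by rewrite -horner_fibre_disc D0 horner0.
have : fibre_disc a b c d 4%:R - 4%:R * fibre_disc a b c d 3%:R
  + 6%:R * fibre_disc a b c d 2%:R - 4%:R * fibre_disc a b c d 1
  + fibre_disc a b c d 0 = - 24%:R by rewrite /fibre_disc; ring.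
by rewrite !Dx !mulr0 !(subr0, addr0) => /eqP; rewrite eq_sym oppr_eq0 pnatr_eq0.
Qed.

Lemma fibre_discl_disc l : l != 0 ->
  fibre_discl a b c d l = l ^+ 4 * fibre_disc a b c d (l + l^-1).
Proof.
by move=> l_neq0; rewrite /fibre_discl /fibre_disc; field; rewrite l_neq0.
Qed.

Lemma good_param_of_x x : disc_poly.[x] != 0 ->
  exists2 l, good_param a b c d l & l + l^-1 = x.
Proof.
rewrite horner_disc_poly mulf_eq0 negb_or => /andP[x2_neq4 Dx_neq0].
have [l lE] := quadratic_solvable x (-1).
have l_neq0 : l != 0.
  apply: contra_eq_neq lE => ->.
  by rewrite expr0n mulr0 add0r eq_sym oppr_eq0 oner_eq0.
have xE : l + l^-1 = x.
  by apply: (mulfI l_neq0); rewrite mulrDr divff // -expr2 lE; ring.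
exists l => //; apply/and3P; split=> //; last first.
  by rewrite fibre_discl_disc // xE mulf_neq0 ?expf_neq0.
apply: contraNneq x2_neq4 => l2_eq1; rewrite -xE.
have -> : (l + l^-1) ^+ 2 - 4%:R = (l - l^-1) ^+ 2 by field.
have -> : l - l^-1 = (l ^+ 2 - 1) / l by field.
by rewrite l2_eq1 mul0r expr0n.
Qed.

Lemma exists_good_param : exists l, good_param a b c d l.
Proof.
have /closed_nonrootP[x Dx] := disc_poly_neq0.
by have [l gl _] := good_param_of_x Dx; exists l.
Qed.

Definition good_poly : {poly R} :=
  'X * ('X ^+ 2 - 1) * fibre_discl a%:P b%:P c%:P d%:P 'X.

Lemma good_poly_good_param l : good_poly.[l] != 0 -> good_param a b c d l.
Proof.
rewrite /good_poly hornerM horner_fibre_discl !hornerE.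
by rewrite !mulf_eq0 !negb_or -andbA.
Qed.

Lemma good_poly_neq0 : good_poly != 0.
Proof.
have [l /and3P[l_neq0 l2_neq1 G_neq0]] := exists_good_param.
have : good_poly.[l] != 0.
  by rewrite /good_poly hornerM horner_fibre_discl !hornerE !mulf_neq0.
by apply: contraNneq => ->; rewrite horner0.
Qed.

End GenericFibres.

Section FibreRestriction.
Variables (R : numClosedFieldType) (a b c d : R) (h : {mpoly R[3]}).
Hypothesis h_nz : forall p, fricke a b c d p = 0 -> h.@[p] != 0.

Definition fibre_restr : {poly {poly R}} :=
  mhomeval (fun k : R => k%:P%:P)
    (fibre_num a%:P%:P b%:P%:P c%:P%:P d%:P%:P 'X%:P 'X)
    (fibre_den 'X%:P 'X) (msize h) h.

Lemma fibre_den_neq0 l r : good_param a b c d l -> r != 0 -> fibre_den l r != 0.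
Proof. by case/and3P=> l_neq0 l2_neq1 _ r_neq0; rewrite !mulf_neq0 ?expf_neq0. Qed.

Lemma eval2_fibre_restr l r : good_param a b c d l -> r != 0 ->
  eval2 l r fibre_restr = fibre_den l r ^+ msize h * h.@[fibre_pt a b c d l r].
Proof.
move=> gl r_neq0; rewrite rmorph_mhomeval rmorph_fibre_den eval2_inner eval2X.
rewrite (eq_mhomeval (f2 := id) (v2 := fibre_num a b c d l r)) => [|k|i].
- by rewrite mhomevalE ?fibre_den_neq0.
- exact: eval2C.
- by rewrite /comp rmorph_fibre_num !eval2C eval2_inner eval2X.
Qed.

Lemma fibre_restr_monomial :
  fibre_restr = (lead_coef fibre_restr)%:P * 'X^((size fibre_restr).-1).
Proof.
apply: (bivariate_monomial (good_poly_neq0 a b c d)).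
move=> l /good_poly_good_param gl r r_neq0; rewrite eval2_fibre_restr //.
by rewrite mulf_neq0 ?expf_neq0 ?fibre_den_neq0 ?h_nz ?fricke_fibre_pt.
Qed.

Lemma meval_fibre_pt l r : good_param a b c d l -> r != 0 ->
  h.@[fibre_pt a b c d l r] * r ^+ msize h
  = (lead_coef fibre_restr).[l] / (l * (l ^+ 2 - 1) ^+ 2) ^+ msize h
    * r ^+ (size fibre_restr).-1.
Proof.
move=> gl r_neq0; have /and3P[l_neq0 l2_neq1 _] := gl.
have w_neq0 : (l * (l ^+ 2 - 1) ^+ 2) ^+ msize h != 0.
  by rewrite expf_neq0 ?mulf_neq0 ?expf_neq0.
have := eval2_fibre_restr gl r_neq0.
rewrite {1}fibre_restr_monomial rmorphM rmorphXn eval2_polyC eval2X.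
rewrite /fibre_den exprMn => E; rewrite mulrAC E.
by move: (msize h) w_neq0 => M w_neq0; field.
Qed.

Lemma fibre_restr_size : (size fibre_restr).-1 = msize h.
Proof.
have [l gl] := exists_good_param a b c d; have gl' := good_param_inv gl.
have /and3P[l_neq0 _ G_neq0] := gl.
apply: (monomial_inversion_exponent
  (f := fun r => h.@[fibre_pt a b c d l r])
  (g := fun s => h.@[fibre_pt a b c d l^-1 s])
  (C := - fibre_discl a b c d l / l ^+ 4)).
- by rewrite mulf_neq0 ?oppr_eq0 ?invr_eq0 ?expf_neq0.
- by rewrite h_nz ?fricke_fibre_pt ?oner_neq0.
- by move=> r; apply: meval_fibre_pt.
- by move=> r; apply: meval_fibre_pt.
- by move=> r r_neq0; apply/esym/meval_eq/fibre_pt_inv.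
Qed.

Lemma meval_fibre_pt_const l r1 r2 : good_param a b c d l -> r1 != 0 -> r2 != 0 ->
  h.@[fibre_pt a b c d l r1] = h.@[fibre_pt a b c d l r2].
Proof.
move=> gl r1_neq0 r2_neq0.
have hE r : r != 0 -> h.@[fibre_pt a b c d l r]
    = (lead_coef fibre_restr).[l] / (l * (l ^+ 2 - 1) ^+ 2) ^+ msize h.
  move=> r_neq0; apply: (mulIf (expf_neq0 (msize h) r_neq0)).
  by rewrite meval_fibre_pt // fibre_restr_size.
by rewrite !hE.
Qed.

Lemma meval_const_on_x_fibre x y z y' z' : (disc_poly a b c d).[x] != 0 ->
  fricke a b c d (mk3 x y z) = 0 -> fricke a b c d (mk3 x y' z') = 0 ->
  h.@[mk3 x y z] = h.@[mk3 x y' z'].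
Proof.
move=> /good_param_of_x[l gl <-] /(fibre_pt_surj gl)[r1 r1_neq0 E1].
move=> /(fibre_pt_surj gl)[r2 r2_neq0 E2].
by rewrite (meval_eq h E1) (meval_eq h E2) (meval_fibre_pt_const gl r1_neq0 r2_neq0).
Qed.

End FibreRestriction.

Section FrickeUnits.
Variables (R : numClosedFieldType) (a b c d : R) (h : {mpoly R[3]}).
Hypothesis h_nz : forall p, fricke a b c d p = 0 -> h.@[p] != 0.

Lemma fricke_z_solvable x y : exists z, fricke a b c d (mk3 x y z) = 0.
Proof.
have [z zE] :=
  quadratic_solvable (x * y + c) (- x ^+ 2 - y ^+ 2 + a * x + b * y + d).
by exists z; rewrite /fricke /mk3 /= -(subrr (z ^+ 2)) {2}zE; ring.
Qed.

Definition mswap : 3.-tuple {mpoly R[3]} := [tuple 'X_i1; 'X_i0; 'X_i2].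

Lemma meval_mswap (g : {mpoly R[3]}) x y z :
  (g \mPo mswap).@[mk3 y x z] = g.@[mk3 x y z].
Proof.
rewrite comp_mpoly_meval; apply: meval_eq => -[[|[|[|]]] ?] //=.
all: by rewrite (tnth_nth 0) /= mevalXU.
Qed.

Lemma meval_mswap_neq0 p : fricke b a c d p = 0 -> (h \mPo mswap).@[p] != 0.
Proof.
move=> Sp; rewrite (meval_eq _ (mk3_eta p)) meval_mswap; apply: h_nz.
by rewrite -fricke_swap.
Qed.

Lemma meval_const_on_generic_fibres : exists c0, forall x y z,
  (disc_poly a b c d).[x] != 0 -> fricke a b c d (mk3 x y z) = 0 ->
  h.@[mk3 x y z] = c0.
Proof.
have /closed_nonrootP[y1 Dy1] := disc_poly_neq0 b a c d.
have /closed_nonrootP[x1 Dx1] := disc_poly_neq0 a b c d.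
have [z1 S1] := fricke_z_solvable x1 y1.
exists h.@[mk3 x1 y1 z1] => x y z Dx Sxyz.
have [z' S'] := fricke_z_solvable x y1.
rewrite (meval_const_on_x_fibre h_nz Dx Sxyz S').
rewrite -(meval_mswap h x) -(meval_mswap h x1).
by apply: (meval_const_on_x_fibre meval_mswap_neq0 Dy1); rewrite fricke_swap.
Qed.

Lemma fricke_unit_const :
  exists c0, forall p, fricke a b c d p = 0 -> h.@[p] = c0.
Proof.
have [c0 h_c0] := meval_const_on_generic_fibres.
exists c0 => p Sp; pose y0 := p i1.
pose P : {poly {poly R}} :=
  mhomeval (fun k : R => k%:P%:P) (mk3 'X%:P y0%:P%:P 'X) 1 (msize h) h
  - c0%:P%:P.
have evalP x z : eval2 x z P = h.@[mk3 x y0 z] - c0.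
  rewrite rmorphB eval2C rmorph_mhomeval rmorph1.
  rewrite (eq_mhomeval (f2 := id) (v2 := mk3 x y0 z)) => [|k|i].
  - rewrite mhomevalE ?oner_neq0 // expr1n mul1r; congr (_ - _).
    by apply: meval_eq => i; rewrite divr1.
  - exact: eval2C.
  - by rewrite rmorph_mk3 eval2_inner eval2C eval2X.
pose B : {poly R} := 'X * y0%:P + c%:P.
pose C : {poly R} := - 'X ^+ 2 + a%:P * 'X + (b * y0 - y0 ^+ 2 + d)%:P.
have frickeE x z : fricke a b c d (mk3 x y0 z) = B.[x] * z + C.[x] - z ^+ 2.
  by rewrite /B /C !hornerE /fricke /mk3 /=; ring.
have conicE x z : z ^+ 2 = B.[x] * z + C.[x] -> fricke a b c d (mk3 x y0 z) = 0.
  by rewrite frickeE => ->; rewrite subrr.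
have p_conic : (p i2) ^+ 2 = B.[p i0] * p i2 + C.[p i0].
  by apply/eqP; rewrite eq_sym -subr_eq0 -frickeE -Sp.
have /eqP : eval2 (p i0) (p i2) P = 0.
  apply: (conic_vanish (disc_poly_neq0 a b c d) _ p_conic) => x Dx z zE.
  by rewrite evalP h_c0 ?subrr ?conicE.
by rewrite evalP subr_eq0 -(meval_eq h (mk3_eta p)) => /eqP.
Qed.

End FrickeUnits.

Lemma sum3 (f : 'I_3 -> CC) : \sum_(i < 3) f i = f i0 + f i1 + f i2.
Proof.
rewrite !big_ord_recl big_ord0 addr0 addrA.
by congr (f _ + f _ + f _); apply: val_inj.
Qed.

Lemma Rt_meval k0 k1 u0 u1 p :
  (Rt k0 k1 u0 u1).@[p] =
  fricke (bar u0 * bar k0 + bar k1 * bar u1) (bar u1 * bar u0 + bar k0 * bar k1)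
    (bar k0 * bar u1 + bar k1 * bar u0)
    (bar k0 ^+ 2 + bar k1 ^+ 2 + bar u0 ^+ 2 + bar u1 ^+ 2
     - bar k0 * bar k1 * bar u0 * bar u1 + 4) p.
Proof.
rewrite /Rt /fricke /X1 /X2 /X3.
by rewrite !(mevalD, mevalB, mevalN, mevalM, mevalZ, mevalC, mevalXU, rmorphXn).
Qed.

Lemma grad_wedge_identity (F : comNzRingType)
    (A12 A13 A23 g0 g1 g2 u0 u1 u2 v0 v1 v2 : F) :
  g0 * u0 + g1 * u1 + g2 * u2 = 0 -> g0 * v0 + g1 * v1 + g2 * v2 = 0 ->
  let Fw := A12 * (u0 * v1 - u1 * v0) + A13 * (u0 * v2 - u2 * v0)
            + A23 * (u1 * v2 - u2 * v1) in
  let H := A23 * g0 - A13 * g1 + A12 * g2 in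
  [/\ g0 * Fw = (u1 * v2 - u2 * v1) * H, g1 * Fw = (u2 * v0 - u0 * v2) * H
    & g2 * Fw = (u0 * v1 - u1 * v0) * H].
Proof.
set ug := _ + _ + _; set vg := _ + _ + _ => ug0 vg0 Fw H.
split; apply/eqP; rewrite -subr_eq0; apply/eqP.
- transitivity (A13 * (v2 * ug - u2 * vg) + A12 * (v1 * ug - u1 * vg)).
    by rewrite /ug /vg /Fw /H; ring.
  by rewrite ug0 vg0; ring.
- transitivity (A23 * (v2 * ug - u2 * vg) + A12 * (u0 * vg - v0 * ug)).
    by rewrite /ug /vg /Fw /H; ring.
  by rewrite ug0 vg0; ring.
- transitivity (A23 * (u1 * vg - v1 * ug) + A13 * (u0 * vg - v0 * ug)).
    by rewrite /ug /vg /Fw /H; ring.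
  by rewrite ug0 vg0; ring.
Qed.

Section TangentForms.
Variables (P : poly3) (w : form2) (p : pt3).
Local Notation g i := (P^`M(i)).@[p].

Definition form_coef : poly3 :=
  a23 w * P^`M(i0) - a13 w * P^`M(i1) + a12 w * P^`M(i2).

Lemma grad_mul_form2_eval u v : tangent P p u -> tangent P p v ->
  [/\ g i0 * form2_eval w p u v = wedge u v i1 i2 * form_coef.@[p],
      g i1 * form2_eval w p u v = wedge u v i2 i0 * form_coef.@[p] &
      g i2 * form2_eval w p u v = wedge u v i0 i1 * form_coef.@[p]].
Proof.
rewrite /tangent !sum3 => tu tv.
rewrite /form2_eval /form_coef /wedge mevalD mevalB !mevalM.
exact: grad_wedge_identity tu tv.
Qed.

Lemma form2_eval_tangent u v : tangent P p u -> tangent P p v -> g i2 != 0 ->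
  form2_eval w p u v = form_coef.@[p] * Omega_eval P p u v.
Proof.
move=> tu tv g2_neq0; have [_ _ E2] := grad_mul_form2_eval tu tv.
apply: (mulfI g2_neq0).
by rewrite E2 /Omega_eval mulrCA (mulrC (g i2)) divfK // mulrC.
Qed.

Lemma exists_nonzero_tangent : exists2 u, tangent P p u & exists i, u i != 0.
Proof.
have [g01|] := boolP ((g i0 != 0) || (g i1 != 0)).
  exists (mk3 (g i1) (- g i0) 0); first by rewrite /tangent sum3 /mk3 /=; ring.
  by case/orP: g01 => [g0|g1]; [exists i1; rewrite /mk3 /= oppr_eq0 | exists i0].
rewrite negb_or !negbK => /andP[/eqP g0 /eqP g1].
exists (mk3 1 0 0); first by rewrite /tangent sum3 /mk3 /= g0 g1; ring.
by exists i0; rewrite /mk3 /= oner_eq0.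
Qed.

Lemma form_coef_neq0 : smooth_hyp P -> symplectic_on P w -> on_Ct P p ->
  form_coef.@[p] != 0.
Proof.
move=> smooth sympl onp; apply/eqP => h0.
have [k gk] := smooth p onp.
have w_tangent0 u : tangent P p u -> forall v, tangent P p v -> form2_eval w p u v = 0.
  move=> tu v tv; have [E0 E1 E2] := grad_mul_form2_eval tu tv.
  have : (k == i0) || (k == i1) || (k == i2) by case: k {gk} => [[|[|[|]]] ?].
  rewrite h0 !mulr0 in E0 E1 E2.
  case/orP=> [/orP[]|] /eqP kE; apply: (mulfI gk);
    by rewrite mulr0 kE ?E0 ?E1 ?E2.
have [u tu [i ui]] := exists_nonzero_tangent.
by move: ui; rewrite (sympl p onp u tu (w_tangent0 u tu)) eqxx.
Qed.

End TangentForms.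

Theorem corollary4p2 (k0 k1 u0 u1 : CC) :
  k0 != 0 -> k1 != 0 -> u0 != 0 -> u1 != 0 ->
  smooth_hyp (Rt k0 k1 u0 u1) ->
  forall w : form2, symplectic_on (Rt k0 k1 u0 u1) w ->
  exists c : CC, forall p : pt3,
    on_Ct (Rt k0 k1 u0 u1) p -> ((Rt k0 k1 u0 u1)^`M(i2)).@[p] != 0 ->
    forall u v : pt3, tangent (Rt k0 k1 u0 u1) p u -> tangent (Rt k0 k1 u0 u1) p v ->
      form2_eval w p u v = c * Omega_eval (Rt k0 k1 u0 u1) p u v.
Proof.
move=> _ _ _ _ smooth w sympl.
have [c0 h_c0] := fricke_unit_const (h := form_coef (Rt k0 k1 u0 u1) w)
  (fun p Sp => form_coef_neq0 smooth sympl (etrans (Rt_meval _ _ _ _ p) Sp)).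
exists c0 => p onp g2_neq0 u v tu tv.
by rewrite (form2_eval_tangent w tu tv g2_neq0) h_c0 // -Rt_meval.
Qed.
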